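(* Let $n\in\mathbb{N}$ and $m\geq 3$. Then \[ \sigma'_m(n) =\frac{1}{(n-1)!} \sum_{k=1}^{n} (-1)^{k-1} (k-1)!\cdot B_{n,k} \big(1!\cdot p'_{m}(1),\ 2!\cdot p'_m(2),\ \dots,\ (n-k+1)!\cdot p'_m(n-k+1)\big). \]
   Context: The partial exponential Bell polynomials are $B_{n,k}(x_1,\dots,x_{n-k+1})=\sum \frac{n!}{j_1!\cdots j_{n-k+1}!}\prod_{i=1}^{n-k+1}\big(\frac{x_i}{i!}\big)^{j_i}$, the sum over all tuples of nonnegative integers $(j_1,\dots,j_{n-k+1})$ with $\sum_i j_i=k$ and $\sum_i i\,j_i=n$. For $m\ge3$ and $n\in\mathbb{N}$, $\sigma'_m(n)$ is the sum of the positive divisors $d$ of $n$ with $d\equiv 0$, $1$ or $m-1 \pmod m$. $p'_m(n)$ is the number of partitions of $n$ in which every part is congruent to $0$, $1$ or $m-1$ modulo $m$. *)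

From mathcomp Require Import all_boot all_order all_algebra.
Set Implicit Arguments. Unset Strict Implicit. Unset Printing Implicit Defensive.
Import Order.TTheory GRing.Theory Num.Theory.

Definition good_res (m d : nat) : bool :=
  [|| d %% m == 0, d %% m == 1 | d %% m == (m - 1) %% m].

Definition sigma' (m n : nat) : nat :=
  \sum_(d <- divisors n | good_res m d) d.

(* A partition of n is represented by its multiplicity function:
   f i = number of parts equal to i.+1 (parts are in 1..n, each with
   multiplicity at most n). *)
Definition is_partition_mult (n : nat) (f : {ffun 'I_n -> 'I_n.+1}) : bool :=
  \sum_(i < n) i.+1 * f i == n.

Definition p' (m n : nat) : nat :=
  #|[set f : {ffun 'I_n -> 'I_n.+1} | is_partition_mult f &&
       [forall i : 'I_n, (f i != 0 :> nat) ==> good_res m i.+1]]|.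

(* Partial exponential Bell polynomial B_{n,k}(x_1,...,x_{n-k+1}),
   where x i.+1 is the variable x_{i+1}. The tuple (j_1,...,j_{n-k+1})
   is f : 'I_(n-k+1) -> 'I_k.+1 (each j_i <= k since sum j_i = k). *)
Definition bellB (n k : nat) (x : nat -> rat) : rat :=
  \sum_(f : {ffun 'I_(n - k + 1) -> 'I_k.+1} |
         (\sum_(i < n - k + 1) (f i : nat) == k) &&
         (\sum_(i < n - k + 1) i.+1 * f i == n))
    ((n`!)%:R / (\prod_(i < n - k + 1) ((f i)`!)%:R) *
     \prod_(i < n - k + 1) (x i.+1 / (i.+1)`!%:R) ^+ f i)%R.

(* Let P be the product of the geometric series 1 + x^d + x^(2d) + ...
   over the admissible part sizes d, so that the coefficients of P count
   admissible partitions.  The logarithmic derivative x P' / P is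
   sum_d d x^d / (1 - x^d), whose n-th coefficient is sigma'_m(n).  On the
   other hand log P = sum_k (-1)^(k-1) (P - 1)^k / k, and by the multinomial
   theorem n!/k! times the n-th coefficient of (P - 1)^k is
   B_{n,k}(1! p'_m(1), 2! p'_m(2), ...).  Comparing n-th coefficients of
   x (log P)' gives the identity.  All series are handled as polynomials
   modulo x^(n+1). *)

From mathcomp Require Import all_boot all_order all_algebra.
From mathcomp Require Import zify ring.
Import Order.TTheory GRing.Theory Num.Theory.
Set Implicit Arguments.
Unset Strict Implicit.

Definition eqmodX (R : nzSemiRingType) (K : nat) (p q : {poly R}) : Prop :=
  take_poly K p = take_poly K q.
Arguments eqmodX {R}.
Notation "p = q %[modX K ]" := (eqmodX K p q) (at level 70, q at next level).

Section TruncatedEquality.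
Variable R : comNzRingType.
Local Open Scope ring_scope.
Implicit Types (p q w A B P : {poly R}) (K k : nat).

Lemma eqmodXP K p q : p = q %[modX K] <-> (forall i, (i < K)%N -> p`_i = q`_i).
Proof.
rewrite /eqmodX; split=> [e i iK | e].
  by have := congr1 (fun r : {poly R} => r`_i) e; rewrite /= !coef_take_poly iK.
by apply/polyP => i; rewrite !coef_take_poly; case: ltnP => // /e.
Qed.

Lemma eqmodX_coef K i p q : p = q %[modX K] -> (i < K)%N -> p`_i = q`_i.
Proof. by move/eqmodXP; apply. Qed.

Lemma eqmodX_refl K p : p = p %[modX K].
Proof. by []. Qed.

Lemma eqmodX_sym K p q : p = q %[modX K] -> q = p %[modX K].
Proof. exact: esym. Qed.

Lemma eqmodX_trans K q p w : p = q %[modX K] -> q = w %[modX K] -> p = w %[modX K].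
Proof. exact: etrans. Qed.

Lemma eqmodXW K' K p q : (K' <= K)%N -> p = q %[modX K] -> p = q %[modX K'].
Proof.
by move=> le /eqmodXP e; apply/eqmodXP => i iK; apply: e; apply: leq_trans le.
Qed.

Lemma eqmodXD K p1 p2 q1 q2 : p1 = q1 %[modX K] -> p2 = q2 %[modX K] ->
  p1 + p2 = q1 + q2 %[modX K].
Proof. by rewrite /eqmodX !take_polyD => -> ->. Qed.

Lemma eqmodXM K p1 p2 q1 q2 : p1 = q1 %[modX K] -> p2 = q2 %[modX K] ->
  p1 * p2 = q1 * q2 %[modX K].
Proof.
move=> /eqmodXP e1 /eqmodXP e2; apply/eqmodXP => i iK; rewrite !coefM.
by apply: eq_bigr => j _; have ji := ltn_ord j; rewrite e1 ?e2 //; lia.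
Qed.

Lemma eqmodX_prod K (I : Type) (r : seq I) (P : pred I) (F G : I -> {poly R}) :
  (forall i, P i -> F i = G i %[modX K]) ->
  \prod_(i <- r | P i) F i = \prod_(i <- r | P i) G i %[modX K].
Proof. by move=> e; apply: (big_ind2 (eqmodX K)) => // *; apply: eqmodXM. Qed.

Lemma eqmodX_addXn K k p w : (K <= k)%N -> p + 'X^k * w = p %[modX K].
Proof.
move=> Kk; apply/eqmodXP => i iK.
by rewrite coefD coefXnM ifT ?addr0 //; apply: leq_trans Kk.
Qed.

Lemma eqmodX_cancel K A B P : P`_0 = 1 -> A * P = B * P %[modX K] -> A = B %[modX K].
Proof.
move=> P0 /eqmodXP e; apply/eqmodXP; elim/ltn_ind => i IH iK.
have := e i iK; rewrite !coefM !big_ord_recr /= subnn P0 !mulr1 => eAB.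
apply: (addrI (\sum_(j < i) B`_j * P`_(i - j))); rewrite -eAB; congr (_ + _).
by apply: eq_bigr => j _; rewrite IH //; have := ltn_ord j; lia.
Qed.

Lemma mulX_drop_poly1 p : p`_0 = 0 -> 'X * drop_poly 1 p = p.
Proof.
move=> p0; apply/polyP => i; rewrite coefXM coef_drop_poly.
by case: i => [|i]; rewrite ?p0 // addn1.
Qed.

Lemma eqmodX_mulXn K k p q : p = q %[modX K] -> 'X^k * p = 'X^k * q %[modX K + k].
Proof.
move/eqmodXP=> e; apply/eqmodXP => i iKk; rewrite !coefXnM.
by case: ltnP => // ki; apply: e; lia.
Qed.

Lemma eqmodX_exp_coef0 K k p q : p`_0 = 0 -> q`_0 = 0 ->
  p = q %[modX K.+1] -> p ^+ k = q ^+ k %[modX K + k].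
Proof.
move=> p0 q0 /eqmodXP e; rewrite -(mulX_drop_poly1 p0) -(mulX_drop_poly1 q0) !exprMn.
apply: eqmodX_mulXn; elim: k => [|k IH]; first exact: eqmodX_refl.
rewrite !exprS; apply: eqmodXM => //; apply/eqmodXP => i iK.
by rewrite !coef_drop_poly; apply: e; lia.
Qed.

End TruncatedEquality.

Section EulerOperator.
Variable R : comNzRingType.
Local Open Scope ring_scope.
Implicit Types (p q g : {poly R}) (K k : nat).

Definition xderiv p := 'X * p^`().

Lemma xderiv1 : xderiv 1 = 0.
Proof. by rewrite /xderiv -polyC1 derivC mulr0. Qed.

Lemma xderivB p q : xderiv (p - q) = xderiv p - xderiv q.
Proof. by rewrite /xderiv derivB mulrBr. Qed.

Lemma xderivM p q : xderiv (p * q) = xderiv p * q + p * xderiv q.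
Proof. by rewrite /xderiv derivM; ring. Qed.

Lemma xderivXn k : xderiv 'X^k = k%:R * 'X^k.
Proof.
case: k => [|k]; first by rewrite expr0 xderiv1 mul0r.
by rewrite /xderiv derivXn -mulr_natl mulrCA -exprS.
Qed.

Lemma xderiv_prod K n (g h : nat -> {poly R}) :
  (forall i, (i < n)%N -> xderiv (g i) = g i * h i %[modX K]) ->
  xderiv (\prod_(i < n) g i) = \prod_(i < n) g i * \sum_(i < n) h i %[modX K].
Proof.
elim: n => [|n IH] gh; first by rewrite !big_ord0 xderiv1 mul1r.
rewrite !big_ord_recr /= xderivM.
have -> : \prod_(i < n) g i * g n * (\sum_(i < n) h i + h n) =
  (\prod_(i < n) g i * \sum_(i < n) h i) * g n + \prod_(i < n) g i * (g n * h n).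
  by ring.
apply: eqmodXD; apply: eqmodXM => //; last exact: gh.
by apply: IH => i ni; apply: gh; apply: ltnW.
Qed.

(* Multiply by the unit 1 - y, y = 'X^d: as (1 - y) g = 1 - y^(N+1), both
   sides become d (g - 1) modulo y^(N+1). *)
Lemma xderiv_geom d N : (0 < d)%N ->
  let g := \sum_(j < N.+1) ('X^d : {poly R}) ^+ j in
  xderiv g = g * (d%:R * (g - 1)) %[modX N.+1].
Proof.
move=> d_gt0 g; set y : {poly R} := 'X^d.
have geom : (1 - y) * g = 1 - y ^+ N.+1.
  by rewrite -[1 - y]opprB mulNr -subrX1 opprB.
have yg : y * g = g - 1 + y ^+ N.+1.
  have -> : g - 1 + y ^+ N.+1 = g - (1 - y ^+ N.+1) by ring.
  by rewrite -geom; ring.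
have lhs : xderiv g * (1 - y) = d%:R * (g - 1) + y ^+ N.+1 * (- (d * N)%:R).
  have -> : xderiv g * (1 - y) = xderiv ((1 - y) * g) + d%:R * (y * g).
    by rewrite xderivM xderivB xderiv1 xderivXn -/y; ring.
  by rewrite geom yg xderivB xderiv1 -exprM xderivXn exprM natrM; ring.
have rhs : g * (d%:R * (g - 1)) * (1 - y) = d%:R * (g - 1) + y ^+ N.+1 * (- d%:R * (g - 1)).
  have -> : g * (d%:R * (g - 1)) * (1 - y) = d%:R * (g - 1) * ((1 - y) * g) by ring.
  by rewrite geom; ring.
apply: (eqmodX_cancel (P := 1 - y)).
  by rewrite coefB coef1 eqxx coefXn eq_sym gtn_eqF // subr0.
have NdN : (N.+1 <= d * N.+1)%N by rewrite leq_pmull.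
rewrite lhs rhs /y -exprM.
exact: eqmodX_trans (eqmodX_addXn _ _ NdN) (eqmodX_sym (eqmodX_addXn _ _ NdN)).
Qed.

End EulerOperator.

Section Multinomial.
Variables (F : numFieldType) (A : comAlgType F).
Local Open Scope ring_scope.

Lemma invf_fact_binomial j l : (l <= j)%N ->
  (l`!%:R)^-1 * ((j - l)`!%:R)^-1 = (j`!%:R)^-1 * 'C(j, l)%:R :> F.
Proof.
move=> lj; rewrite -(bin_fact lj) !natrM.
have fact_neq0 n : n`!%:R != 0 :> F by rewrite pnatr_eq0 -lt0n fact_gt0.
have bin_neq0 : 'C(j, l)%:R != 0 :> F by rewrite pnatr_eq0 -lt0n bin_gt0.
by field; rewrite !fact_neq0 bin_neq0.
Qed.

(* exp (a Y) truncated in degree k; the multinomial theorem is read off the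
   coefficient of Y^k in prod_i exp (c_i Y) = exp ((sum_i c_i) Y). *)
Definition exp_trunc k (a : A) : {poly A} := \poly_(j < k.+1) ((j`!%:R)^-1 *: a ^+ j).

Lemma coef_prod_exp_trunc k (c : nat -> A) M j : (j <= k)%N ->
  (\prod_(i < M) exp_trunc k (c i))`_j = (j`!%:R)^-1 *: (\sum_(i < M) c i) ^+ j.
Proof.
elim: M j => [|M IH] j jk.
  by rewrite !big_ord0 coef1 expr0n; case: j {jk} => [|j] /=; rewrite ?invr1 ?scale1r ?scaler0.
rewrite !big_ord_recr /= coefM addrC exprDn scaler_sumr; apply: eq_bigr => l _.
have lj : (l <= j)%N by rewrite -ltnS.
rewrite IH ?(leq_trans lj) // coef_poly ifT; last by rewrite ltnS (leq_trans (leq_subr _ _)).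
rewrite -scalerAl -scalerAr scalerA -scaler_nat scalerA invf_fact_binomial //.
by rewrite mulrC [_ ^+ (j - l) * _]mulrC.
Qed.

Lemma multinomial M k (c : nat -> A) :
  (k`!%:R)^-1 *: (\sum_(i < M) c i) ^+ k =
  \sum_(f : {ffun 'I_M -> 'I_k.+1} | (\sum_(i < M) f i)%N == k)
     \prod_(i < M) (((f i)`!%:R)^-1 *: c i ^+ f i).
Proof.
rewrite -(coef_prod_exp_trunc c M (leqnn k)).
under eq_bigr do rewrite /exp_trunc poly_def.
rewrite bigA_distr_bigA /= coef_sum [RHS]big_mkcond /=; apply: eq_bigr => f _.
by rewrite scaler_prod prodrXr coefZ coefXn eq_sym; case: eqP; rewrite ?mulr1 ?mulr0.
Qed.

End Multinomial.

Section BellPolynomials.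
Local Open Scope ring_scope.

Lemma bellB_coef n k (x : nat -> rat) (Q : {poly rat}) : (0 < k <= n)%N -> Q`_0 = 0 ->
  (forall i, (0 < i <= n)%N -> x i = i`!%:R * Q`_i) ->
  bellB n k x = n`!%:R / k`!%:R * (Q ^+ k)`_n.
Proof.
move=> /andP [k_gt0 kn] Q0 xQ; set M := (n - k + 1)%N.
set QM := \sum_(i < M) Q`_i.+1 *: 'X^(i.+1).
have QMX : QM = 'X * \poly_(i < M) Q`_i.+1.
  by rewrite poly_def mulr_sumr; apply: eq_bigr => i _; rewrite -scalerAr -exprS.
have QQM : Q ^+ k = QM ^+ k %[modX M + k].
  apply: eqmodX_exp_coef0 => //; first by rewrite QMX coefXM.
  apply/eqmodXP; case=> [|i] iM; rewrite QMX coefXM ?Q0 //= coef_poly ifT //.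
have nMk : (n < M + k)%N by rewrite /M; lia.
rewrite (eqmodX_coef QQM nMk) -mulrA -coefZ.
rewrite (multinomial M k (fun i => Q`_i.+1 *: 'X^(i.+1))) coef_sum mulr_sumr.
rewrite /bellB big_mkcondr /=; apply: eq_bigr => f _.
rewrite (eq_bigr (fun i : 'I_M => ((f i)`!%:R^-1 * Q`_i.+1 ^+ f i) *: 'X^(i.+1 * f i))).
  2: by move=> i _; rewrite exprZn -exprM scalerA.
rewrite scaler_prod prodrXr coefZ coefXn eq_sym.
case: eqP => _; last by rewrite !mulr0.
rewrite mulr1 big_split /= prodfV -natr_prod -mulrA; congr (_ * (_ * _)).
apply: eq_bigr => i _; congr (_ ^+ _); rewrite xQ; last by have := ltn_ord i; lia.
by rewrite mulrAC mulfV ?mul1r // pnatr_eq0 -lt0n fact_gt0.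
Qed.

End BellPolynomials.

Section TruncatedLogarithm.
Variable F : numFieldType.
Local Open Scope ring_scope.

Definition log_trunc n (Q : {poly F}) : {poly F} :=
  \sum_(1 <= k < n.+1) ((-1) ^+ (k - 1) / k%:R) *: Q ^+ k.

Lemma xderiv_log_trunc n (P : {poly F}) : P`_0 = 1 ->
  xderiv (log_trunc n (P - 1)) * P = xderiv P %[modX n.+1].
Proof.
move=> P0; set Q := P - 1.
have Q0 : Q`_0 = 0 by rewrite coefB P0 coef1 subrr.
have dL : xderiv (log_trunc n Q) = (\sum_(i < n) (- Q) ^+ i) * xderiv Q.
  rewrite /log_trunc /xderiv raddf_sum mulr_sumr big_add1 /= big_mkord mulr_suml.
  apply: eq_bigr => i _; rewrite derivZ deriv_exp subn1 /=.
  rewrite -scaler_nat scalerA divfK ?pnatr_eq0 // -scalerAr -mul_polyC.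
  by rewrite rmorphXn rmorphN rmorph1 [(- Q) ^+ _]exprNn; ring.
have geom : (1 + Q) * \sum_(i < n) (- Q) ^+ i = 1 - (- Q) ^+ n.
  by rewrite -[1 + Q]opprK opprD addrC mulNr -subrX1 opprB.
have QX := esym (mulX_drop_poly1 Q0); set Q1 := drop_poly 1 Q in QX.
have -> : xderiv P = xderiv Q by rewrite xderivB xderiv1 subr0.
have -> : xderiv (log_trunc n Q) * P =
    xderiv Q + 'X^(n.+1) * (- (Q^`() * (-1) ^+ n * Q1 ^+ n)).
  rewrite dL -[P](subrK 1) -/Q addrC mulrC mulrA geom.
  by rewrite [in (- Q) ^+ n]QX (exprNn ('X * Q1)) exprMn /xderiv exprS; ring.
exact: eqmodX_addXn.
Qed.

End TruncatedLogarithm.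

Section PartitionGeneratingFunction.
Variable good : pred nat.
Local Open Scope ring_scope.
Implicit Types (N t d : nat).

Definition part_count t := #|[set f : {ffun 'I_t -> 'I_t.+1} |
  is_partition_mult f && [forall i, (f i != 0 :> nat) ==> good i.+1]]|.

Definition divisor_sum N := (\sum_(d <- divisors N | good d) d)%N.

(* For an inadmissible d only the term j = 0 survives, so that expanding
   [part_gf N] runs over the same multiplicity functions as [part_count N]. *)
Definition part_factor N d : {poly rat} :=
  \sum_(j < N.+1) ((j == 0 :> nat) || good d)%:R *: 'X^(d * j).

Definition part_gf N : {poly rat} := \prod_(i < N) part_factor N i.+1.

Definition sigma_gf N : {poly rat} := \sum_(i < N) i.+1%:R * (part_factor N i.+1 - 1).

Lemma part_factor_trunc t N d : (t <= N)%N -> (0 < d)%N ->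
  part_factor t d = part_factor N d %[modX d * t.+1].
Proof.
move=> tN d_gt0; apply/eqmodXP => i it; rewrite !coef_sumMXn.
rewrite (@big_ord_widen_cond _ _ _ t.+1 N.+1 (fun j => true && (d * j == i)%N)
  (fun j => ((j == 0) || good d)%:R)) //.
apply: eq_bigl => j /=; case: eqP => //= dj.
by rewrite -(ltn_pmul2l d_gt0) dj.
Qed.

Lemma part_gf_trunc t N : (t <= N)%N -> part_gf t = part_gf N %[modX t.+1].
Proof.
move=> tN; rewrite /part_gf (big_ord_widen _ (fun i => part_factor t i.+1) tN).
rewrite [X in _ = X %[modX _]](bigID (fun i : 'I_N => (i < t)%N)) /=.
rewrite -[X in X = _ %[modX _]]mulr1; apply: eqmodXM.
  apply: eqmodX_prod => i it; apply: (eqmodXW _ (part_factor_trunc tN (ltn0Sn i))).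
  by rewrite leq_pmull.
rewrite -{1}(big1_eq _ _ : \prod_(i < N | ~~ (i < t)%N) 1 = 1).
apply: eqmodX_prod => i; rewrite -leqNgt => ti.
have -> : 1 = part_factor 0 i.+1 by rewrite /part_factor big_ord1 /= muln0 scale1r.
by apply: (eqmodXW _ (part_factor_trunc (leq0n N) (ltn0Sn i))); rewrite muln1.
Qed.

Lemma coef0_part_gf N : (part_gf N)`_0 = 1.
Proof. by rewrite -(eqmodX_coef (part_gf_trunc (leq0n N))) // /part_gf big_ord0 coef1. Qed.

Lemma coef_part_gf_id N : (part_gf N)`_N = (part_count N)%:R.
Proof.
rewrite /part_gf /part_factor /part_count bigA_distr_bigA /= coef_sum -sum1_card natr_sum.
rewrite [RHS]big_mkcond /=; apply: eq_bigr => f _.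
rewrite scaler_prod prodrXr coefZ coefXn inE /is_partition_mult eq_sym andbC.
have -> : \prod_(i < N) ((f i == 0 :> nat) || good i.+1)%:R =
          [forall i, (f i != 0 :> nat) ==> good i.+1]%:R :> rat.
  case: forallP => [allg | /forallP/forallPn [i]].
    by apply: big1 => i _; have := allg i; rewrite implybE negbK => ->.
  by rewrite negb_imply => /andP [/negbTE fi0 /negbTE gi]; rewrite (bigD1 i) //= fi0 gi mul0r.
by case: [forall _, _]; case: (_ == _); rewrite /= ?(mulr1, mulr0, mul0r).
Qed.

Lemma coef_part_factor_sub1 N d : (0 < N)%N ->
  (part_factor N d - 1)`_N = (good d && (d %| N)%N)%:R.
Proof.
move=> N_gt0; rewrite /part_factor big_ord_recl /= muln0 scale1r addrC addKr.
rewrite coef_sumMXn; have [/dvdnP [k eN] | ndN] := boolP (d %| N)%N; last first.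
  rewrite andbF big_pred0 // => j; apply/negbTE; apply: contra ndN => /eqP <-.
  exact: dvdn_mulr.
have [k_gt0 d_gt0] : (0 < k)%N /\ (0 < d)%N by move: N_gt0; rewrite eN muln_gt0 => /andP.
have dkN j : (d * j.+1 == N)%N = (j == k.-1).
  by rewrite eN mulnC eqn_pmul2r // -{1}(prednK k_gt0).
rewrite (eq_bigl (fun j : 'I_N => j == k.-1 :> nat)).
  by rewrite (big_ord1_eq _ (fun=> (good d)%:R)) andbT ifT //; nia.
by move=> j; rewrite /= -dkN.
Qed.

Lemma coef_sigma_gf N : (0 < N)%N -> (sigma_gf N)`_N = (divisor_sum N)%:R.
Proof.
move=> N_gt0; have divsE : perm_eq (divisors N) [seq d <- index_iota 1 N.+1 | (d %| N)%N].
  apply: uniq_perm; rewrite ?filter_uniq ?iota_uniq ?divisors_uniq // => d.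
  rewrite mem_filter mem_index_iota -dvdn_divisors //.
  by case: (boolP (d %| N)%N) => //= dN; rewrite (dvdn_gt0 N_gt0 dN) ltnS dvdn_leq.
rewrite /divisor_sum (perm_big _ divsE) big_filter_cond big_add1 big_mkord natr_sum coef_sum.
rewrite [RHS]big_mkcond; apply: eq_bigr => i _.
rewrite mulr_natl coefMn coef_part_factor_sub1 // andbC.
by case: (_ && _); rewrite ?mulr1n ?mul0rn.
Qed.

Lemma xderiv_part_factor N d : (0 < d)%N ->
  xderiv (part_factor N d) = part_factor N d * (d%:R * (part_factor N d - 1)) %[modX N.+1].
Proof.
move=> d_gt0; case: (boolP (good d)) => gd.
  have -> : part_factor N d = \sum_(j < N.+1) 'X^d ^+ j.
    by apply: eq_bigr => j _; rewrite gd orbT scale1r exprM.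
  exact: xderiv_geom.
have -> : part_factor N d = 1.
  rewrite /part_factor big_ord_recl /= muln0 scale1r big1 ?addr0 // => j _.
  by rewrite (negbTE gd) scale0r.
by rewrite xderiv1 subrr !mulr0.
Qed.

Lemma xderiv_part_gf N : xderiv (part_gf N) = part_gf N * sigma_gf N %[modX N.+1].
Proof.
apply: (xderiv_prod (g := fun i => part_factor N i.+1)
                    (h := fun i => i.+1%:R * (part_factor N i.+1 - 1))) => i _.
exact: xderiv_part_factor.
Qed.

Lemma coef_part_gf t N : (t <= N)%N -> (part_gf N)`_t = (part_count t)%:R.
Proof. by move=> tN; rewrite -(eqmodX_coef (part_gf_trunc tN)) // coef_part_gf_id. Qed.

Lemma xderiv_log_part_gf n :
  xderiv (log_trunc n (part_gf n - 1)) = sigma_gf n %[modX n.+1].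
Proof.
have P0 := coef0_part_gf n; apply: (eqmodX_cancel P0).
rewrite [X in _ = X %[modX _]]mulrC.
exact: eqmodX_trans (xderiv_log_trunc n P0) (xderiv_part_gf n).
Qed.

Lemma coef_log_part_gf n : (0 < n)%N ->
  n%:R * (log_trunc n (part_gf n - 1))`_n = 1 / (n - 1)`!%:R *
    \sum_(1 <= k < n.+1) (-1) ^+ (k - 1) * (k - 1)`!%:R *
                          bellB n k (fun i => (i`! * part_count i)%:R).
Proof.
move=> n_gt0; have Q0 : (part_gf n - 1)`_0 = 0 by rewrite coefB coef0_part_gf coef1 subrr.
rewrite coef_sum !mulr_sumr; apply: eq_big_nat => k /andP [k_gt0 kn].
rewrite coefZ (bellB_coef (Q := part_gf n - 1)) ?k_gt0 // => [|i /andP [i_gt0 iN]]; last first.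
  by rewrite natrM coefB coef1 gtn_eqF // subr0 coef_part_gf.
have factE j : (0 < j)%N -> j`! = (j * (j - 1)`!)%N by case: j => // j _; rewrite factS subn1.
rewrite (factE n) // (factE k) // !natrM.
have fact_neq0 j : j`!%:R != 0 :> rat by rewrite pnatr_eq0 -lt0n fact_gt0.
have nat_neq0 j : (0 < j)%N -> j%:R != 0 :> rat by rewrite pnatr_eq0 -lt0n.
by field; rewrite !fact_neq0 !nat_neq0.
Qed.

Theorem divisor_sum_bellB n : (0 < n)%N ->
  (divisor_sum n)%:R = 1 / (n - 1)`!%:R *
    \sum_(1 <= k < n.+1) (-1) ^+ (k - 1) * (k - 1)`!%:R *
                          bellB n k (fun i => (i`! * part_count i)%:R).
Proof.
move=> n_gt0; rewrite -coef_log_part_gf // -coef_sigma_gf //.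
rewrite -(eqmodX_coef (xderiv_log_part_gf n) (ltnSn n)) /xderiv coefXM eqn0Ngt n_gt0.
by rewrite coef_deriv prednK // mulr_natl.
Qed.

End PartitionGeneratingFunction.

Unset Implicit Arguments.

Theorem corollary3p2 (n m : nat) : 0 < n -> 3 <= m ->
  ((sigma' m n)%:R : rat) =
  (1 / ((n - 1)`!)%:R *
   \sum_(1 <= k < n.+1)
     (-1) ^+ (k - 1) * ((k - 1)`!)%:R *
     bellB n k (fun i => (i`! * p' m i)%:R))%R.
Proof.
by move=> n_gt0 _; exact: (divisor_sum_bellB (good_res m) n_gt0).
Qed.
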